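(* Let $q$ be a prime power, $r\ge 1$ an integer, and $\mathcal{S}$ a $q^r$-divisible spanning set of $q^{r+1}$ points in $\mathrm{PG}(v-1,q)$. If $\mathcal{S}$ contains a full affine $(r+1)$-space, i.e. there exist an $(r+1)$-space $L$ and an $r$-space $F\subseteq L$ such that every point of $L$ not contained in $F$ belongs to $\mathcal{S}$, then $\mathcal{S}$ is an $(r+1)$-cylinder.
   Context: $\mathrm{PG}(v-1,q)$ is the projective space of $\mathbb{F}_q^v$; a $k$-space is a $k$-dimensional subspace of $\mathbb{F}_q^v$ (points are $1$-spaces, hyperplanes $(v-1)$-spaces). A set $\mathcal{S}$ of points is spanning if its points span $\mathbb{F}_q^v$, and it is $q^r$-divisible if $|\mathcal{S}\cap H|\equiv|\mathcal{S}|\pmod{q^r}$ for every hyperplane $H$. An $(r+1)$-cylinder is a multiset of $q^{r+1}$ points which arises as the union (counted with multiplicity) of the point sets $L_1\setminus F,\dots,L_q\setminus F$, where $L_1,\dots,L_q$ are $(r+1)$-spaces and $F$ is an $r$-space contained in every $L_i$ ($L_i\setminus F$ denotes the set of points of $L_i$ not in $F$). *)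

From mathcomp Require Import all_boot all_order all_algebra all_field.
Set Implicit Arguments. Unset Strict Implicit. Unset Printing Implicit Defensive.
Import GRing.Theory.
Local Open Scope ring_scope.

(* Subspaces of K^v are represented by their canonical row-space matrices
   <<A>>%MS : 'M[K]_v ; a k-space is such a matrix of rank k. *)

Definition is_point (K : fieldType) (v : nat) (P : 'M[K]_v) : bool :=
  (\rank P == 1)%N && (<<P>>%MS == P).

Definition pts_in (K : finFieldType) (v : nat) (S : {set 'M[K]_v}) (H : 'M[K]_v)
  : nat := #|[set P in S | (P <= H)%MS]|.

Definition spanning (K : finFieldType) (v : nat) (S : {set 'M[K]_v}) : Prop :=
  \rank (\sum_(P in S) P)%MS = v.

Definition divisible (K : finFieldType) (v : nat) (S : {set 'M[K]_v}) (m : nat)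
  : Prop :=
  forall H : 'M[K]_v, \rank H = v.-1 -> pts_in S H = #|S| %[mod m].

Definition contains_affine (K : finFieldType) (v : nat) (S : {set 'M[K]_v})
  (r : nat) : Prop :=
  exists (L F : 'M[K]_v),
    [/\ \rank L = r.+1, \rank F = r, (F <= L)%MS &
        forall P, is_point P -> (P <= L)%MS -> ~~ (P <= F)%MS -> P \in S].

(* S (as a multiset with multiplicities in {0,1}) is an (r+1)-cylinder:
   the multiset sum over i < q of the point sets L_i \ F, where q = #|K|. *)
Definition is_cylinder (K : finFieldType) (v : nat) (S : {set 'M[K]_v})
  (r : nat) : Prop :=
  exists (F : 'M[K]_v) (L : 'I_#|K| -> 'M[K]_v),
    [/\ \rank F = r,
        forall i, \rank (L i) = r.+1 /\ (F <= L i)%MS &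
        forall P, is_point P ->
          ((P \in S) : nat) =
          (\sum_(i < #|K|) (((P <= L i)%MS && ~~ (P <= F)%MS) : nat))%N].

(* Let q = #|K| and call a point P outside F a hole if P is not
   in S.
   1. Divisibility descends: every subspace W of codimension r meets S in a
      multiple of q points (double counting S against the hyperplanes
      containing W).
   2. Coordinates adapted to F give an explicit family of complements
      W_M = compl M of F, indexed by square matrices M.  Every complement
      meets L \ F, so by 1. it carries at least q points of S.  Among the
      complements through a fixed point P0 (outside F), those through a
      further point P outside F + P0 form an exact 1/q^r fraction, while
      no point of (F + P0) \ F other than P0 lies on any of them.
   3. Averaging over the complements through a hole P0 then shows that S
      avoids F + P0 entirely ([hole_isolates]).  Counting shows that a hole
      exists, so S avoids F and is a union of fibres (F + Q) \ F.
   4. Each fibre has q^r points, so S consists of q fibres; the fibres are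
      indexed by their intersections with a fixed complement W_0, which
      exhibits S as a cylinder. *)

From mathcomp Require Import all_boot all_order all_algebra all_field.
From mathcomp Require Import zify.
Set Implicit Arguments. Unset Strict Implicit. Unset Printing Implicit Defensive.
Import GRing.Theory.
Local Open Scope ring_scope.

Lemma card_fibres (T U : finType) (A : {set T}) (B : {set U}) (g : T -> U)
    (c : nat) :
  (forall x, x \in A -> g x \in B) ->
  (forall u, u \in B -> #|[set x in A | g x == u]| = c) ->
  #|A| = (#|B| * c)%N.
Proof.
move=> gAB Hc; rewrite -sum1_card (partition_big g (mem B)) //=.
rewrite -sum_nat_const; apply: eq_bigr => u uB.
by rewrite -(Hc u uB) -sum1_card; apply: eq_bigl => x; rewrite inE.
Qed.

Lemma card_set_count (T : finType) (A : {set T}) (p : pred T) :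
  #|[set x in A | p x]| = (\sum_(x in A) (p x : nat))%N.
Proof.
rewrite -sum1_card (eq_bigl (fun x => (x \in A) && p x)) => [|x]; last first.
  by rewrite inE.
by rewrite big_mkcondr /=; apply: eq_bigr => x _; case: (p x).
Qed.

Lemma sum_const_set (T : finType) (A : {set T}) (p : pred T) (c : nat) :
  (\sum_(x in A | p x) c = #|[set x in A | p x]| * c)%N.
Proof.
rewrite card_set_count big_distrl /= big_mkcondr; apply: eq_bigr => x _.
by case: (p x); rewrite ?mul1n ?mul0n.
Qed.

Lemma card_split (T : finType) (A : {set T}) (p : pred T) :
  (#|[set x in A | p x]| + #|[set x in A | ~~ p x]|)%N = #|A|.
Proof.
rewrite !card_set_count -big_split /= -sum1_card.
by apply: eq_bigr => x _; case: (p x).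
Qed.

Lemma sum_cast n m (e : n = m) (f : 'I_m -> nat) :
  (\sum_(i < n) f (cast_ord e i) = \sum_(j < m) f j)%N.
Proof. by case: m / e f => f; apply: eq_bigr => i _; rewrite cast_ord_id. Qed.

Section Points.
Variables (K : finFieldType) (v : nat).
Local Notation q := #|K|.

Lemma card_field_gt1 : (1 < q)%N.
Proof. by apply/card_gt1P; exists 0, 1; rewrite !inE eq_sym oner_neq0. Qed.

Lemma card_submx m (X : 'M[K]_(m, v)) :
  #|[set y : 'rV[K]_v | (y <= X)%MS]| = (q ^ \rank X)%N.
Proof.
have := card_mx K 1 (\rank X); rewrite mul1n => <-.
have -> : [set y : 'rV[K]_v | (y <= X)%MS] =
   (fun u : 'rV_(\rank X) => u *m row_base X) @: setT.
  apply/setP=> y; rewrite inE; apply/idP/imsetP.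
    move=> yX; have /submxP[u ->] : (y <= row_base X)%MS by rewrite eq_row_base.
    by exists u.
  by case=> u _ ->; apply: submx_trans (submxMl u _) _; rewrite eq_row_base.
by rewrite card_imset ?cardsT //; exact: row_free_inj (row_base_free X).
Qed.

Lemma separating_form (a a0 : 'rV[K]_v) : ~~ (a <= a0)%MS ->
  exists t : 'cV[K]_v, a0 *m t = 0 /\ a *m t = 1.
Proof.
rewrite submxE => /eqP nz.
have [j nzj] : exists j, (a *m cokermx a0) 0 j != 0.
  apply/existsP; apply: contraT; rewrite negb_exists => /forallP H.
  case: nz; apply/matrixP => i j; rewrite [RHS]mxE (ord1 i).
  by apply/eqP; move: (H j); rewrite negbK.
set c := (a *m cokermx a0) 0 j.
have formE u : u *m (\col_l (c^-1 * cokermx a0 l j)) =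
    (c^-1 * (u *m cokermx a0) 0 j)%:M.
  apply/matrixP=> i k; rewrite (ord1 i) (ord1 k) !mxE eqxx mulr1n mulr_sumr.
  by apply: eq_bigr => l _; rewrite mxE mulrCA.
exists (\col_l (c^-1 * cokermx a0 l j)); rewrite !formE mulmx_coker mxE mulr0.
by split; [exact: raddf0 | rewrite mulVf].
Qed.

Lemma kermx_dual (W : 'M[K]_v) : (W == kermx (kermx W^T)^T)%MS.
Proof.
have sW : (W <= kermx (kermx W^T)^T)%MS.
  by apply/sub_kermxP; rewrite -[W *m _]trmxK trmx_mul trmxK mulmx_ker trmx0.
rewrite -(mxrank_leqif_eq sW) mxrank_ker mxrank_tr mxrank_ker mxrank_tr subKn //.
exact: rank_leq_col.
Qed.

Lemma point_nz_row (P : 'M[K]_v) : is_point P ->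
  nz_row P != 0 /\ (nz_row P :=: P)%MS.
Proof.
case/andP=> /eqP r1 _.
have nz : nz_row P != 0 by rewrite nz_row_eq0 -mxrank_eq0 r1.
split=> //; apply/eqmxP; rewrite -(mxrank_leqif_eq (nz_row_sub P)).
by rewrite r1 rank_rV nz.
Qed.

Lemma point_sub m (P : 'M[K]_v) (X : 'M[K]_(m, v)) : is_point P ->
  (P <= X)%MS = (nz_row P <= X)%MS.
Proof. by case/point_nz_row=> _ e; rewrite e. Qed.

Lemma rank_point (P : 'M[K]_v) : is_point P -> \rank P = 1%N.
Proof. by case/andP=> /eqP. Qed.

Lemma genmx_point (y : 'rV[K]_v) : y != 0 -> is_point <<y>>%MS.
Proof. by move=> nz; rewrite /is_point mxrank_gen rank_rV nz genmx_id eqxx. Qed.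

Lemma point_eq (P Q : 'M[K]_v) : is_point P -> is_point Q -> (P <= Q)%MS ->
  P = Q.
Proof.
move=> pP pQ sPQ.
have e : (P == Q)%MS by rewrite -(mxrank_leqif_eq sPQ) !rank_point.
by case/andP: pP => _ /eqP <-; case/andP: pQ => _ /eqP <-; exact/eq_genmx/eqmxP.
Qed.

Lemma vec_point_eq (y : 'rV[K]_v) (P : 'M[K]_v) : y != 0 -> is_point P ->
  (y <= P)%MS -> <<y>>%MS = P.
Proof. by move=> nz pP yP; apply: point_eq (genmx_point nz) pP _; rewrite genmxE. Qed.

Lemma rank_adds_point (F Q : 'M[K]_v) : is_point Q -> ~~ (Q <= F)%MS ->
  \rank (F + Q)%MS = (\rank F).+1.
Proof.
move=> pQ nQ; have := mxrank_sum_cap F Q; rewrite [\rank Q]rank_point //.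
have -> : \rank (F :&: Q)%MS = 0%N.
  apply/eqP; rewrite mxrank_eq0; apply/negPn/negP => nz.
  have zz : nz_row (F :&: Q)%MS != 0 by rewrite nz_row_eq0.
  have zQ := submx_trans (nz_row_sub _) (capmxSr F Q).
  have zF := submx_trans (nz_row_sub _) (capmxSl F Q).
  by move/negP: nQ; apply; rewrite -(vec_point_eq zz pQ zQ) genmxE.
by rewrite addn0 addn1.
Qed.

Lemma adds_point_sym (F P Q : 'M[K]_v) : is_point P -> is_point Q ->
  ~~ (P <= F)%MS -> ~~ (Q <= F)%MS -> (P <= F + Q)%MS -> (Q <= F + P)%MS.
Proof.
move=> pP pQ nP nQ sPQ.
have s : (F + P <= F + Q)%MS by rewrite addsmx_sub addsmxSl.
have /andP[_ e] : (F + P == F + Q)%MS.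
  by rewrite -(mxrank_leqif_eq s) !rank_adds_point.
exact: submx_trans (addsmxSr F Q) e.
Qed.

(* Points with a property T in X, counted through their nonzero vectors:
   each point carries q - 1 of them. *)
Lemma card_points (T : pred 'M[K]_v) (X : 'M[K]_v) :
  (#|[set P | is_point P && T P && (P <= X)%MS]| * q.-1)%N =
  #|[set y : 'rV[K]_v | (y != 0) && T <<y>>%MS && (y <= X)%MS]|.
Proof.
symmetry; apply: (card_fibres (g := fun y : 'rV[K]_v => <<y>>%MS)) => [y|P].
  rewrite !inE => /andP[/andP[nz Ty] yX].
  by rewrite genmx_point // Ty genmxE.
rewrite inE => /andP[/andP[pP TP] PX].
have -> : [set y in [set y : 'rV[K]_v | (y != 0) && T <<y>>%MS && (y <= X)%MS] |
            <<y>>%MS == P] = [set y : 'rV[K]_v | (y <= P)%MS] :\ 0.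
  apply/setP=> y; rewrite !inE; apply/idP/idP.
    by case/andP=> /andP[/andP[nz _] _] /eqP <-; rewrite nz genmxE submx_refl.
  case/andP=> nz yP; rewrite nz (vec_point_eq nz pP yP) TP eqxx andbT /=.
  exact: submx_trans yP PX.
have := cardsD1 0 [set y : 'rV[K]_v | (y <= P)%MS].
by rewrite inE sub0mx card_submx add1n rank_point // expn1 => ->.
Qed.

Lemma card_fibre (F Q : 'M[K]_v) : is_point Q -> ~~ (Q <= F)%MS ->
  #|[set P | is_point P && ~~ (P <= F)%MS && (P <= F + Q)%MS]| = (q ^ \rank F)%N.
Proof.
move=> pQ nQ; have q1 := card_field_gt1.
have := card_points (fun P => ~~ (P <= F)%MS) (F + Q)%MS.
have -> : [set y : 'rV[K]_v | (y != 0) && ~~ (<<y>> <= F)%MS && (y <= F + Q)%MS] =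
          [set y : 'rV[K]_v | (y <= F + Q)%MS] :\: [set y : 'rV[K]_v | (y <= F)%MS].
  apply/setP => y; rewrite !inE genmxE.
  apply/idP/idP => [/andP[/andP[_ ->] ->] // | /andP[nyF yFQ]].
  by rewrite nyF yFQ !andbT; apply: contra nyF => /eqP ->; exact: sub0mx.
rewrite cardsD.
have -> : [set y : 'rV[K]_v | (y <= F + Q)%MS] :&: [set y : 'rV[K]_v | (y <= F)%MS]
          = [set y : 'rV[K]_v | (y <= F)%MS].
  apply/setP => y; rewrite !inE andb_idl // => yF.
  exact: submx_trans yF (addsmxSl _ _).
rewrite !card_submx rank_adds_point // expnS.
rewrite -{2}(mul1n (q ^ \rank F)%N) -mulnBl subn1 [RHS]mulnC => /eqP.
by rewrite eqn_mul2r -subn1 subn_eq0 leqNgt q1 => /eqP.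
Qed.

Lemma sum_pts_in (I : finType) (A : {set I}) (S : {set 'M[K]_v})
    (X : I -> 'M[K]_v) :
  (\sum_(i in A) pts_in S (X i) =
   \sum_(P in S) #|[set i in A | (P <= X i)%MS]|)%N.
Proof.
rewrite /pts_in; under eq_bigr do rewrite card_set_count.
by rewrite exchange_big; apply: eq_bigr => P _; rewrite card_set_count.
Qed.

End Points.

Section Divisibility.
Variables (K : finFieldType) (v : nat).
Local Notation q := #|K|.

Lemma card_form_kernel m (X : 'M[K]_(m, v)) (y : 'rV[K]_v) :
  y *m X^T != 0 ->
  (#|[set a : 'rV[K]_v | (a <= X)%MS && (y *m a^T == 0%R)]| * q)%N =
  (q ^ \rank X)%N.
Proof.
move=> nzyX; set A := [set a : 'rV[K]_v | (a <= X)%MS].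
set g := fun a : 'rV[K]_v => (y *m a^T) 0 0.
have gE a : (y *m a^T == 0) = (g a == 0).
  rewrite /g; apply/eqP/eqP => [->|h]; first by rewrite mxE.
  by rewrite [y *m a^T]mx11_scalar h raddf0.
have glin a b (u : K) : g (a + u *: b) = g a + u * g b.
  by rewrite /g linearD linearZ /= mulmxDr -scalemxAr !mxE.
have [a0 a0A ga0] : exists2 a0, a0 \in A & g a0 = 1.
  have [i gi] : exists i, g (row i X) != 0.
    apply/existsP; apply: contraNT nzyX; rewrite negb_exists => /forallP H.
    apply/eqP/matrixP => j i; rewrite (ord1 j) [RHS]mxE.
    move: (H i); rewrite negbK /g => /eqP <-; rewrite !mxE.
    by apply: eq_bigr => k _; rewrite !mxE.
  exists ((g (row i X))^-1 *: row i X); first by rewrite inE scalemx_sub ?row_sub.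
  by rewrite -[_ *: _]add0r glin {1}/g linear0 mulmx0 mxE add0r mulVf.
(* translation by a multiple of a0 permutes the fibres of g *)
have fibre u : #|[set a in A | g a == u]| = #|[set a in A | g a == 0]|.
  have -> : [set a in A | g a == u] =
            (fun a => a + u *: a0) @: [set a in A | g a == 0].
    move: a0A; rewrite inE => a0X.
    apply/setP=> a; rewrite inE; apply/idP/imsetP.
      case/andP=> aA /eqP gau; exists (a - u *: a0); last by rewrite subrK.
      rewrite !inE -scaleNr glin ga0 gau mulr1 subrr eqxx andbT.
      by move: aA; rewrite inE => aX; rewrite addmx_sub // scalemx_sub.
    case=> b; rewrite !inE => /andP[bX /eqP gb0] ->.
    by rewrite glin gb0 ga0 mulr1 add0r eqxx andbT addmx_sub // scalemx_sub.
  by rewrite card_imset //; exact: addIr.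
have := card_fibres (B := [set: K]) (g := g) (A := A) (fun _ _ => in_setT _)
  (fun u _ => fibre u).
rewrite card_submx cardsT mulnC => ->; congr (_ * _)%N; apply: eq_card => a.
by rewrite !inE gE.
Qed.

(* The forms a in the annihilator W^perp of a codimension-r subspace W (the
   hyperplanes through W, and a = 0) whose kernel contains a point P outside
   W make up a 1/q fraction of the q^r forms of W^perp. *)
Lemma card_forms_through (W P : 'M[K]_v) (r : nat) : \rank W = (v - r)%N ->
  (r <= v)%N -> is_point P -> ~~ (P <= W)%MS ->
  (#|[set a : 'rV[K]_v | (a <= kermx W^T)%MS && (P <= kermx a^T)%MS]| * q)%N =
  (q ^ r)%N.
Proof.
move=> rW rv pP PW.
have rWp : \rank (kermx W^T) = r by rewrite mxrank_ker mxrank_tr rW subKn.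
have nzyW : nz_row P *m (kermx W^T)^T != 0.
  apply: contra PW => /eqP yW; rewrite (point_sub _ pP) (eqmxP (kermx_dual W)).
  exact/sub_kermxP.
rewrite -rWp -(card_form_kernel nzyW); congr (_ * _)%N.
by apply: eq_card => a; rewrite !inE (point_sub _ pP) !sub_kermx.
Qed.

Lemma pts_codim_dvd (S : {set 'M[K]_v}) (r : nat) : (0 < r)%N -> (r <= v)%N ->
  {subset S <= @is_point K v} -> divisible S (q ^ r) -> #|S| = (q ^ r.+1)%N ->
  forall W : 'M[K]_v, \rank W = (v - r)%N -> (q %| pts_in S W)%N.
Proof.
move=> r0 rv Spt dS cS W rW; have q1 := card_field_gt1 K.
set A := [set a : 'rV[K]_v | (a <= kermx W^T)%MS].
have rWp : \rank (kermx W^T) = r by rewrite mxrank_ker mxrank_tr rW subKn.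
have qr : (q ^ r = q * q ^ r.-1)%N by rewrite -expnS prednK.
(* each hyperplane (a <> 0), and the whole space (a = 0), meets S in a
   multiple of q^r points *)
have dvd_sum : (q ^ r %| \sum_(a in A) pts_in S (kermx a^T))%N.
  apply: dvdn_sum => a aA; case: (eqVneq a 0) => [->|nz].
    have -> : pts_in S (kermx (0 : 'rV[K]_v)^T) = #|S|.
      apply: eq_card => P; rewrite !inE sub_kermx linear0 mulmx0 eqxx.
      by rewrite andbT.
    by rewrite cS expnS dvdn_mull.
  have rk : \rank (kermx a^T) = v.-1 by rewrite mxrank_ker mxrank_tr rank_rV nz subn1.
  by rewrite /dvdn (dS _ rk) cS expnS modnMl.
have incidences P : P \in S -> #|[set a in A | (P <= kermx a^T)%MS]| =
    if (P <= W)%MS then (q ^ r)%N else (q ^ r.-1)%N.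
  move=> PS; case: ifP => PW.
    rewrite -rWp -card_submx; apply: eq_card => a.
    rewrite !inE andb_idr // => /sub_kermxP aW; case/submxP: PW => D ->.
    by rewrite sub_kermx -mulmxA -(trmxK (W *m _)) trmx_mul trmxK aW trmx0 mulmx0.
  apply/eqP; rewrite -(eqn_pmul2r (ltnW q1)) -expnSr prednK //.
  rewrite -(card_forms_through rW rv (Spt P PS) (negbT PW)).
  by apply/eqP; congr (_ * _)%N; apply: eq_card => a; rewrite !inE.
move: dvd_sum; rewrite sum_pts_in (bigID (fun P => (P <= W)%MS)) /=.
rewrite (eq_bigr (fun _ => q ^ r)%N) => [|P /andP[PS PW]]; last first.
  by rewrite incidences // PW.
rewrite [X in (_ + X)%N](eq_bigr (fun _ => q ^ r.-1)%N) => [|P /andP[PS PW]]; last first.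
  by rewrite incidences // (negbTE PW).
rewrite !sum_const_set (dvdn_addr _ (dvdn_mull _ (dvdnn _))) qr.
rewrite dvdn_pmul2r ?expn_gt0 ?(ltnW q1) // => dvd_out.
rewrite /pts_in -(dvdn_addl _ dvd_out) card_split cS expnS dvdn_mulr //.
Qed.

End Divisibility.

Section Complements.
Variables (K : finFieldType) (v r : nat) (F : 'M[K]_v).
Hypothesis rF : \rank F = r.
Local Notation q := #|K|.

(* In the basis [fbasis] of K^v, F is spanned by the first r vectors;
   [coordF] and [coordC] keep the first r, resp. the remaining, coordinates
   of a vector.  [projC] is locked so that rewriting does not unfold it. *)
Definition fbasis : 'M[K]_v := row_ebase F.
Definition projF : 'M[K]_v := pid_mx r.
Definition projC : 'M[K]_v := locked (copid_mx r).
Definition coordF (y : 'rV[K]_v) : 'rV[K]_v := y *m invmx fbasis *m projF.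
Definition coordC (y : 'rV[K]_v) : 'rV[K]_v := y *m invmx fbasis *m projC.

(* The complement W_M of F: vectors whose F-coordinates are obtained from
   their other coordinates by M. *)
Definition compl (M : 'M[K]_v) : 'M[K]_v :=
  kermx (invmx fbasis *m (projF - projC *m M *m projF)).

Lemma r_le_v : (r <= v)%N. Proof. by rewrite -rF rank_leq_col. Qed.

Lemma projF_idem : projF *m projF = projF. Proof. exact: pid_mx_id r_le_v. Qed.
Lemma projFC : projF *m projC = 0.
Proof. by rewrite /projC -lock; exact: mul_pid_mx_copid r_le_v. Qed.
Lemma projF_addC : projF + projC = 1%:M.
Proof. by rewrite /projC -lock /copid_mx addrC subrK. Qed.
Lemma fbasis_unit : fbasis \in unitmx. Proof. exact: row_ebase_unit. Qed.

Lemma F_coords : (F :=: projF *m fbasis)%MS.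
Proof.
rewrite -{1}(mulmx_ebase F) rF -mulmxA; apply: eqmxMfull.
by rewrite row_full_unit col_ebase_unit.
Qed.

Lemma coord_decomp (y : 'rV[K]_v) : y = (coordC y + coordF y) *m fbasis.
Proof. by rewrite -mulmxDr addrC projF_addC mulmx1 mulmxKV ?fbasis_unit. Qed.

Lemma sub_F_of_coords (z : 'rV[K]_v) : (z <= projF)%MS -> (z *m fbasis <= F)%MS.
Proof. by move=> zE; rewrite F_coords; exact: submxMr. Qed.

Lemma coordF_sub (y : 'rV[K]_v) : (coordF y <= projF)%MS.
Proof. exact: submxMl. Qed.

Lemma coordC_eq0 (y : 'rV[K]_v) : coordC y = 0 -> (y <= F)%MS.
Proof.
by move=> y0; rewrite (coord_decomp y) y0 add0r sub_F_of_coords ?coordF_sub.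
Qed.

Lemma coordC_sub_adds (y y0 : 'rV[K]_v) :
  (coordC y <= coordC y0)%MS -> (y <= F + y0)%MS.
Proof.
case/submxP=> D hD; rewrite -[y](subrK (D *m y0)).
apply: addmx_sub_adds; last exact: submxMl.
have -> : y - D *m y0 = (coordF y - D *m coordF y0) *m fbasis.
  rewrite {1}(coord_decomp y) {1}(coord_decomp y0) hD.
  move: (coordC y0) (coordF y0) (coordF y) fbasis => a b c B.
  by rewrite mulmxA mulmxDr -mulmxBl opprD addrACA subrr add0r.
apply: sub_F_of_coords; rewrite addmx_sub ?eqmx_opp ?coordF_sub //.
exact: submx_trans (submxMl _ _) (coordF_sub _).
Qed.

Lemma mem_compl M (y : 'rV[K]_v) :
  (y <= compl M)%MS = (coordF y == coordC y *m M *m projF).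
Proof. by rewrite sub_kermx mulmxA mulmxBr subr_eq0 /coordC /coordF !mulmxA. Qed.

Lemma rank_compl M : \rank (compl M) = (v - r)%N.
Proof.
rewrite mxrank_ker; congr (_ - _)%N.
have -> : invmx fbasis *m (projF - projC *m M *m projF) =
    (invmx fbasis *m (1%:M - projC *m M *m projF)) *m projF.
  rewrite -[RHS]mulmxA mulmxBl mul1mx.
  by rewrite -[projC *m M *m projF *m projF]mulmxA projF_idem.
have U : (1%:M - projC *m M *m projF) \in unitmx.
  have h : (1%:M + projC *m M *m projF) *m (1%:M - projC *m M *m projF) = 1%:M.
    rewrite mulmxDl mul1mx mulmxBr mulmx1 -!mulmxA (mulmxA projF projC) projFC.
    by rewrite mul0mx !mulmx0 subr0 subrK.
  by case: (mulmx1_unit h).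
have full : row_full (invmx fbasis *m (1%:M - projC *m M *m projF)).
  by rewrite row_full_unit unitmx_mul unitmx_inv fbasis_unit.
by rewrite (eqmxMfull _ full) rank_pid_mx ?r_le_v.
Qed.

Lemma compl_capF M (y : 'rV[K]_v) : (y <= compl M)%MS -> (y <= F)%MS -> y = 0.
Proof.
rewrite mem_compl F_coords => /eqP h /submxP [D yD].
have k : y *m invmx fbasis = D *m projF by rewrite yD -mulmxA mulmxK ?fbasis_unit.
move: h; rewrite /coordC /coordF k -(mulmxA D projF projC) projFC mulmx0.
by rewrite !mul0mx -mulmxA projF_idem => h; rewrite yD mulmxA h mul0mx.
Qed.

Lemma rank_compl_capF M : \rank (compl M :&: F)%MS = 0%N.
Proof.
apply/eqP; rewrite mxrank_eq0; apply/eqP/row_matrixP => i; rewrite row0.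
exact: compl_capF (submx_trans (row_sub i _) (capmxSl _ _))
  (submx_trans (row_sub i _) (capmxSr _ _)).
Qed.

Lemma exists_compl_through (P0 : 'M[K]_v) : is_point P0 -> ~~ (P0 <= F)%MS ->
  exists M, (P0 <= compl M)%MS.
Proof.
move=> pP0; rewrite !(point_sub _ pP0); set y0 := nz_row P0 => nF0.
have nz0 : ~~ (coordC y0 <= (0 : 'rV[K]_v))%MS.
  by apply: contra nF0 => /submx0null; exact: coordC_eq0.
have [t [_ t1]] := separating_form nz0.
exists (t *m coordF y0); rewrite (point_sub _ pP0) mem_compl !mulmxA t1 mul1mx.
by rewrite /coordF -[X in _ == X]mulmxA projF_idem.
Qed.

(* Among the complements through y0, those also through y form a 1/q^r
   fraction, provided y is independent of y0 modulo F: translating M by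
   a rank-one matrix moves the F-coordinates of y freely while fixing y0. *)
Lemma card_compl_through (y0 y : 'rV[K]_v) :
  ~~ (coordC y <= coordC y0)%MS ->
  #|[set M | (y0 <= compl M)%MS]| =
  (q ^ r * #|[set M | (y0 <= compl M)%MS && (y <= compl M)%MS]|)%N.
Proof.
move=> ind; have [t [t0 t1]] := separating_form ind.
set A := [set M | (y0 <= compl M)%MS].
set g := fun M : 'M[K]_v => coordC y *m M *m projF.
have fixF w : (w <= projF)%MS -> w *m projF = w.
  by case/submxP=> D ->; rewrite -mulmxA projF_idem.
have fibre_le w w' : (w <= projF)%MS -> (w' <= projF)%MS ->
    (#|[set M in A | g M == w]| <= #|[set M in A | g M == w']|)%N.
  move=> wF w'F; rewrite -(card_imset _ (addIr (t *m (w' - w)))).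
  apply: subset_leq_card; apply/subsetP => N /imsetP [M].
  rewrite !inE !mem_compl => /andP [/eqP h0 /eqP h1] ->; rewrite /g in h1.
  rewrite !mulmxDr !mulmxDl !mulmxA t0 !mul0mx !addr0 -h0 eqxx /= /g.
  rewrite !mulmxDr !mulmxDl !mulmxA t1 !mul1mx h1 mulNmx !fixF //.
  by rewrite addrCA subrr addr0.
have card_projF : #|[set w : 'rV[K]_v | (w <= projF)%MS]| = (q ^ r)%N.
  by rewrite card_submx rank_pid_mx ?r_le_v.
rewrite -card_projF.
apply: (card_fibres (g := g)) => [M _|w]; first by rewrite inE /g; exact: submxMl.
rewrite inE => wF.
have -> : [set M | (y0 <= compl M)%MS && (y <= compl M)%MS] =
          [set M in A | g M == coordF y].
  by apply/setP=> M; rewrite !inE [(y <= _)%MS]mem_compl [coordF y == _]eq_sym.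
by apply/eqP; rewrite eqn_leq !fibre_le ?coordF_sub.
Qed.

(* The same count for points: P outside F + P0 is independent of P0
   modulo F. *)
Lemma card_compl_through_points (P0 P : 'M[K]_v) : is_point P0 -> is_point P ->
  ~~ (P <= F + P0)%MS ->
  #|[set M | (P0 <= compl M)%MS]| =
  (q ^ r * #|[set M | (P0 <= compl M)%MS && (P <= compl M)%MS]|)%N.
Proof.
move=> pP0 pP nP; have [_ e0] := point_nz_row pP0.
have ind : ~~ (coordC (nz_row P) <= coordC (nz_row P0))%MS.
  apply: contra nP => /coordC_sub_adds.
  by rewrite (adds_eqmx (eqmx_refl F) e0) -(point_sub _ pP).
have -> : [set M | (P0 <= compl M)%MS] = [set M | (nz_row P0 <= compl M)%MS].
  by apply/setP => M; rewrite !inE (point_sub _ pP0).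
rewrite (card_compl_through ind); congr (_ * _)%N; apply: eq_card => M.
by rewrite !inE (point_sub _ pP0) (point_sub _ pP).
Qed.

Lemma compl_meets (L : 'M[K]_v) M : \rank L = r.+1 ->
  exists Q, [/\ is_point Q, (Q <= compl M)%MS, (Q <= L)%MS & ~~ (Q <= F)%MS].
Proof.
move=> rL; set X := (compl M :&: L)%MS.
have rX : (0 < \rank X)%N.
  have := mxrank_sum_cap (compl M) L; rewrite rank_compl rL.
  have := rank_leq_col (compl M + L)%MS; have := r_le_v; rewrite /X; lia.
have nzX : nz_row X != 0 by rewrite nz_row_eq0 -mxrank_eq0 -lt0n.
have zW := submx_trans (nz_row_sub X) (capmxSl _ _).
have zL := submx_trans (nz_row_sub X) (capmxSr _ _).
exists <<nz_row X>>%MS; rewrite genmx_point // !genmxE; split => //.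
by apply/negP => zF; rewrite (compl_capF zW zF) eqxx in nzX.
Qed.

Definition compl_point M (P : 'M[K]_v) : 'M[K]_v :=
  <<(compl M :&: (F + P))%MS>>%MS.

Lemma compl_pointP M P : is_point P -> ~~ (P <= F)%MS ->
  [/\ is_point (compl_point M P), (compl_point M P <= compl M)%MS,
      (compl_point M P <= F + P)%MS & ~~ (compl_point M P <= F)%MS].
Proof.
move=> pP nP; have rFP := rank_adds_point pP nP; rewrite rF in rFP.
have rWF : \rank (compl M + F)%MS = v.
  have := mxrank_sum_cap (compl M) F; rewrite rank_compl_capF rank_compl rF.
  have := r_le_v; lia.
have rWFP : \rank (compl M + (F + P))%MS = v.
  apply/eqP; rewrite eqn_leq rank_leq_col -{1}rWF mxrankS //.
  by rewrite addsmxS // addsmxSl.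
have rX : \rank (compl M :&: (F + P))%MS = 1%N.
  have := mxrank_sum_cap (compl M) (F + P)%MS; rewrite rWFP rank_compl rFP.
  have := rank_leq_col (F + P)%MS; rewrite rFP; have := r_le_v; lia.
have pX : is_point (compl_point M P).
  by rewrite /is_point /compl_point mxrank_gen rX genmx_id !eqxx.
split => //; rewrite /compl_point ?genmxE ?capmxSl ?capmxSr //.
apply/negP => XF.
have : (compl M :&: (F + P) <= compl M :&: F)%MS by rewrite sub_capmx capmxSl XF.
by move/mxrankS; rewrite rank_compl_capF rX.
Qed.

Lemma compl_point_uniq M P Q : is_point P -> ~~ (P <= F)%MS -> is_point Q ->
  (Q <= compl M)%MS -> (Q <= F + P)%MS -> Q = compl_point M P.
Proof.
move=> pP nP pQ QW QFP; have [pX _ _ _] := compl_pointP M pP nP.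
by apply: point_eq pQ pX _; rewrite /compl_point genmxE sub_capmx QW QFP.
Qed.

End Complements.

Section Cylinder.
Variables (K : finFieldType) (v r : nat) (S : {set 'M[K]_v}) (L F : 'M[K]_v).
Local Notation q := #|K|.
Hypothesis r_gt0 : (0 < r)%N.
Hypothesis S_points : {subset S <= @is_point K v}.
Hypothesis S_div : divisible S (q ^ r).
Hypothesis card_S : #|S| = (q ^ r.+1)%N.
Hypothesis rank_L : \rank L = r.+1.
Hypothesis rank_F : \rank F = r.
Hypothesis S_affine :
  forall P, is_point P -> (P <= L)%MS -> ~~ (P <= F)%MS -> P \in S.

Let q_gt1 : (1 < q)%N := card_field_gt1 K.

(* Each complement of F meets L \ F, hence S, so by Step 1 it carries at
   least q points of S. *)
Lemma compl_meets_S M : (q <= pts_in S (compl r F M))%N.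
Proof.
have [Q [pQ QW QL nQF]] := compl_meets rank_F M rank_L.
have := pts_codim_dvd r_gt0 (r_le_v rank_F) S_points S_div card_S
  (rank_compl rank_F M).
apply: dvdn_leq; apply/card_gt0P; exists Q; rewrite !inE QW andbT.
exact: S_affine.
Qed.

(* Key lemma: averaging |S /\ W| over the complements W through a hole P0
   shows that S misses F + P0 entirely. *)
Lemma hole_isolates P0 : is_point P0 -> ~~ (P0 <= F)%MS -> P0 \notin S ->
  forall P, P \in S -> ~~ (P <= F + P0)%MS.
Proof.
move=> pP0 nF0 nS0 P1 P1S; apply/negP => P1F0.
set MM := [set M | (P0 <= compl r F M)%MS].
set far := [set P in S | ~~ (P <= F + P0)%MS].
have MM_gt0 : (0 < #|MM|)%N.
  have [M P0M] := exists_compl_through rank_F pP0 nF0.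
  by apply/card_gt0P; exists M; rewrite inE.
have lower : (q * #|MM| <= \sum_(M in MM) pts_in S (compl r F M))%N.
  by rewrite mulnC -sum_nat_const; apply: leq_sum => M _; exact: compl_meets_S.
(* complements through P0 meet F + P0 only in P0, which is not in S *)
have near_miss P : P \in S -> (P <= F + P0)%MS ->
    #|[set M in MM | (P <= compl r F M)%MS]| = 0%N.
  move=> PS PF0; apply: eq_card0 => M; rewrite !inE; apply/negP => /andP[P0W PW].
  have P_eq := compl_point_uniq rank_F pP0 nF0 (S_points PS) PW PF0.
  have P0_eq := compl_point_uniq rank_F pP0 nF0 pP0 P0W (addsmxSr _ _).
  rewrite P_eq -P0_eq in PS.
  by rewrite PS in nS0.
(* any other point of S lies on exactly 1/q^r of them *)
have far_hit P : P \in S -> ~~ (P <= F + P0)%MS ->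
    (q ^ r * #|[set M in MM | (P <= compl r F M)%MS]|)%N = #|MM|.
  move=> PS nPF0; rewrite (card_compl_through_points rank_F pP0 (S_points PS) nPF0).
  by congr (_ * _)%N; apply: eq_card => M; rewrite !inE.
have upper : (q ^ r * \sum_(M in MM) pts_in S (compl r F M) = #|far| * #|MM|)%N.
  rewrite sum_pts_in big_distrr /= (bigID (fun P => (P <= F + P0)%MS)) /=.
  rewrite big1 ?add0n; last by move=> P /andP[PS PF0]; rewrite near_miss ?muln0.
  rewrite (eq_bigr (fun _ => #|MM|)); last by move=> P /andP[PS nPF0]; exact: far_hit.
  by rewrite sum_const_set.
have far_lt : (#|far| < #|S|)%N.
  rewrite -(card_split S (fun P => (P <= F + P0)%MS)) -[X in (X < _)%N]add0n.
  by rewrite ltn_add2r; apply/card_gt0P; exists P1; rewrite !inE P1S P1F0.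
have := leq_mul (leqnn (q ^ r)) lower; rewrite mulnA -expnSr -card_S upper.
by rewrite leq_pmul2r // leqNgt far_lt.
Qed.

Lemma few_points_arith (n a X : nat) : (1 < n)%N -> (0 < a)%N -> (X <= a)%N ->
  (a * n.-1 <= X - 1)%N -> False.
Proof. nia. Qed.

Lemma many_outside_arith (n a X c : nat) : (1 < n)%N -> (0 < a)%N ->
  (n * (n * a) <= X)%N -> (a + c = X)%N -> (c <= n * a * n.-1)%N -> False.
Proof. nia. Qed.

(* S has more points than an (r+1)-dimensional space, so v >= r + 2. *)
Lemma rank_space_ge : (r.+2 <= v)%N.
Proof.
have := card_points (fun P => P \in S) (1%:M : 'M[K]_v).
have -> : [set P | is_point P && (P \in S) && (P <= 1%:M)%MS] = S.
  apply/setP=> P; rewrite inE submx1 andbT; apply/idP/idP => [/andP[] //|PS].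
  by rewrite PS andbT; exact: S_points.
have ub : (#|[set y : 'rV[K]_v | (y != 0%R) && (<<y>>%MS \in S) && (y <= 1%:M)%MS]|
             <= q ^ v - 1)%N.
  have := cardsD1 0 [set y : 'rV[K]_v | (y <= 1%:M)%MS].
  rewrite inE sub0mx card_submx mxrank1 add1n => ->.
  rewrite subn1 /=; apply: subset_leq_card; apply/subsetP => y.
  by rewrite !inE => /andP[/andP[-> _] ->].
move=> e; rewrite -e card_S in ub; rewrite ltnNge; apply/negP => vle.
have le_v : (q ^ v <= q ^ r.+1)%N by apply: leq_pexp2l; first exact: ltnW.
have a_gt0 : (0 < q ^ r.+1)%N by rewrite expn_gt0 ltnW.
exact: few_points_arith q_gt1 a_gt0 le_v ub.
Qed.

(* There are more points outside F than points in S, so a hole exists. *)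
Lemma exists_hole : exists P0, [/\ is_point P0, ~~ (P0 <= F)%MS & P0 \notin S].
Proof.
have /existsP [P0 /andP[/andP[pP0 nF0] nS0]] :
    [exists P0, is_point P0 && ~~ (P0 <= F)%MS && (P0 \notin S)]; last by exists P0.
apply: contraT; rewrite negb_exists => /forallP no_hole.
have := card_points (fun P => ~~ (P <= F)%MS) (1%:M : 'M[K]_v).
have le_S : (#|[set P | is_point P && ~~ (P <= F)%MS && (P <= 1%:M)%MS]| <= #|S|)%N.
  apply: subset_leq_card; apply/subsetP => P; rewrite inE => /andP[/andP[pP nP] _].
  by move: (no_hole P); rewrite pP nP /= negbK.
have -> : [set y : 'rV[K]_v | (y != 0) && ~~ (<<y>> <= F)%MS && (y <= 1%:M)%MS] =
          ~: [set y : 'rV[K]_v | (y <= F)%MS].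
  apply/setP => y; rewrite !inE genmxE submx1 andbT.
  apply/idP/idP => [/andP[]//|nyF]; rewrite nyF andbT.
  by apply: contra nyF => /eqP ->; exact: sub0mx.
have cC := cardsC [set y : 'rV[K]_v | (y <= F)%MS].
rewrite card_submx rank_F card_mx mul1n in cC.
move=> e; have := leq_mul le_S (leqnn q.-1); rewrite e card_S expnS => le_out.
have le_v : (q ^ r.+2 <= q ^ v)%N.
  by apply: leq_pexp2l; [exact: ltnW | exact: rank_space_ge].
rewrite !expnS in le_v.
have a_gt0 : (0 < q ^ r)%N by rewrite expn_gt0 ltnW.
by case: (many_outside_arith q_gt1 a_gt0 le_v cC le_out).
Qed.

Lemma S_avoids_F P : P \in S -> ~~ (P <= F)%MS.
Proof.
move=> PS; have [P0 [pP0 nF0 nS0]] := exists_hole.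
apply: contra (hole_isolates pP0 nF0 nS0 PS) => PF.
exact: submx_trans PF (addsmxSl _ _).
Qed.

(* S is a union of fibres (F + P) \ F: a point of such a fibre missing from
   S would be a hole whose fibre meets S. *)
Lemma S_fibre_closed P P' : P \in S -> is_point P' -> ~~ (P' <= F)%MS ->
  (P' <= F + P)%MS -> P' \in S.
Proof.
move=> PS pP' nF' sP'; apply/negPn/negP => nS'.
have := hole_isolates pP' nF' nS' PS.
by rewrite (adds_point_sym pP' (S_points PS) nF' (S_avoids_F PS) sP').
Qed.

(* The fibres of S are represented by their points in the complement W_0. *)
Definition base : {set 'M[K]_v} := [set Q in S | (Q <= compl r F 0)%MS].
Local Notation rep := (compl_point r F 0).

Lemma S_rep P : is_point P -> ~~ (P <= F)%MS -> (P \in S) = (rep P \in base).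
Proof.
move=> pP nP; have [pX XW XFP nX] := compl_pointP rank_F 0 pP nP.
rewrite inE XW andbT; apply/idP/idP => [PS|XS].
  exact: S_fibre_closed PS pX nX XFP.
exact: S_fibre_closed XS pP nP (adds_point_sym pX pP nX nP XFP).
Qed.

Lemma adds_base P Q : is_point P -> ~~ (P <= F)%MS -> Q \in base ->
  (P <= F + Q)%MS = (Q == rep P).
Proof.
move=> pP nP; rewrite inE => /andP[QS QW].
have pQ : is_point Q := S_points QS; have nQ := S_avoids_F QS.
apply/idP/eqP => [/(adds_point_sym pP pQ nP nQ) QFP | ->].
  exact: (compl_point_uniq rank_F pP nP pQ QW QFP).
have [pX _ XFP nX] := compl_pointP rank_F 0 pP nP.
exact: adds_point_sym pX pP nX nP XFP.
Qed.

(* Each fibre has q^r points and S has q^(r+1), so there are q fibres. *)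
Lemma card_base : #|base| = q.
Proof.
have fibre Q : Q \in base -> #|[set P in S | rep P == Q]| = (q ^ r)%N.
  move=> QB; have QS : Q \in S by move: QB; rewrite inE => /andP[].
  have := card_fibre (S_points QS) (S_avoids_F QS); rewrite rank_F => <-.
  apply: eq_card => P; rewrite !inE.
  case: (boolP (is_point P && ~~ (P <= F)%MS)) => [/andP[pP nP] | h].
    rewrite (S_rep pP nP) (adds_base pP nP QB) [Q == _]eq_sym.
    by case: eqP => [->|]; rewrite ?QB ?andbF.
  rewrite andFb; apply/negbTE; apply: contra h => /andP[PS _].
  by rewrite (S_avoids_F PS) andbT; exact: S_points PS.
have rep_base P : P \in S -> rep P \in base.
  by move=> PS; rewrite -(S_rep (S_points PS) (S_avoids_F PS)).
have := card_fibres rep_base fibre.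
by rewrite card_S expnS => /eqP; rewrite eqn_mul2r expn_eq0 eqn0Ngt (ltnW q_gt1) /= => /eqP.
Qed.

Lemma S_cylinder : is_cylinder S r.
Proof.
pose Q (i : 'I_q) := enum_val (cast_ord (esym card_base) i).
have QS i : Q i \in S by have := enum_valP (cast_ord (esym card_base) i); rewrite inE => /andP[].
exists F, (fun i => (F + Q i)%MS); split => // [i|P pP].
  have pQ : is_point (Q i) := S_points (QS i).
  by split; [rewrite rank_adds_point ?S_avoids_F ?rank_F | exact: addsmxSl].
have -> : (\sum_(i < q) ((P <= F + Q i)%MS && ~~ (P <= F)%MS : nat))%N =
          (\sum_(B in base) ((P <= F + B)%MS && ~~ (P <= F)%MS : nat))%N.
  rewrite [RHS]big_enum_val /=.
  exact: (sum_cast (esym card_base)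
            (fun j => ((P <= F + enum_val j)%MS && ~~ (P <= F)%MS : nat))).
case: (boolP (P <= F)%MS) => PF.
  rewrite big1 => [|B _]; last by rewrite andbF.
  by rewrite (negbTE (contraL (@S_avoids_F P) PF)).
rewrite (eq_bigr (fun B => (B == rep P : nat))) => [|B BB]; last first.
  by rewrite andbT adds_base.
rewrite (S_rep pP PF); case: (boolP (rep P \in base)) => h.
  rewrite (bigD1 (rep P)) //= eqxx big1 // => B /andP[_ nB].
  by rewrite (negbTE nB).
by rewrite big1 // => B BB; apply/eqP; rewrite eqb0; apply: contraNneq h => <-.
Qed.

End Cylinder.

Theorem mainTheorem10 (K : finFieldType) (v r : nat) (S : {set 'M[K]_v}) :
  (1 <= r)%N ->
  {subset S <= @is_point K v} ->
  divisible S (#|K| ^ r) ->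
  spanning S ->
  #|S| = (#|K| ^ r.+1)%N ->
  contains_affine S r ->
  is_cylinder S r.
Proof.
move=> r_gt0 S_points S_div _ card_S [L [F [rank_L rank_F _ S_affine]]].
exact: S_cylinder r_gt0 S_points S_div card_S rank_L rank_F S_affine.
Qed.
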